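(* Let $(A,\mu,\alpha,\beta)$ be a BiHom-associative algebra and $R:A\to A$ an $\alpha\beta$-Rota-Baxter operator. Let $\eta:A\to A$ be an algebra map commuting with $\alpha$, $\beta$ and $R$. Define $x\prec y=\alpha\beta(x)R(\eta(y))$ and $x\succ y=R(x)\alpha\beta\eta(y)$ for $x,y\in A$. Then $(A,\prec,\succ,\alpha^2\beta,\alpha\beta^2\eta)$ is a BiHom-dendriform algebra.
   Context: A BiHom-associative algebra $(A,\mu,\alpha,\beta)$: linear space with bilinear $\mu(x\otimes y)=xy$ and linear maps $\alpha,\beta$ with $\alpha\beta=\beta\alpha$, both multiplicative, and $\alpha(x)(yz)=(xy)\beta(z)$ for all $x,y,z$. An $\alpha\beta$-Rota-Baxter operator is a linear map $R$ commuting with $\alpha$ and $\beta$ such that $R(\alpha\beta(a))R(\alpha\beta(b))=R\big(\alpha\beta(a)R(b)+R(a)\alpha\beta(b)\big)$ for all $a,b$. A BiHom-dendriform algebra $(A,\prec,\succ,\alpha',\beta')$: bilinear $\prec,\succ$ and commuting linear maps $\alpha',\beta'$ multiplicative for both operations such that $(x\prec y)\prec\beta'(z)=\alpha'(x)\prec(y\prec z+y\succ z)$, $(x\succ y)\prec\beta'(z)=\alpha'(x)\succ(y\prec z)$, $\alpha'(x)\succ(y\succ z)=(x\prec y+x\succ y)\succ\beta'(z)$. *)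

From HB Require Import structures.
From mathcomp Require Import all_boot all_order all_algebra.
Set Implicit Arguments. Unset Strict Implicit. Unset Printing Implicit Defensive.
Import GRing.Theory.
Local Open Scope ring_scope.

Definition is_linear (K : fieldType) (A : lmodType K) (f : A -> A) : Prop :=
  forall (a : K) (x y : A), f (a *: x + y) = a *: f x + f y.

Definition is_bilinear (K : fieldType) (A : lmodType K) (m : A -> A -> A) : Prop :=
  (forall x : A, is_linear (m x)) /\ (forall y : A, is_linear (fun x => m x y)).

Definition multiplicative_for (A : Type) (m : A -> A -> A) (f : A -> A) : Prop :=
  forall x y : A, f (m x y) = m (f x) (f y).

Definition commute_maps (A : Type) (f g : A -> A) : Prop :=
  forall x : A, f (g x) = g (f x).

Definition BiHomAssociative (K : fieldType) (A : lmodType K)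
  (mu : A -> A -> A) (alpha beta : A -> A) : Prop :=
  [/\ is_bilinear mu, is_linear alpha /\ is_linear beta,
      commute_maps alpha beta,
      multiplicative_for mu alpha /\ multiplicative_for mu beta &
      forall x y z : A, mu (alpha x) (mu y z) = mu (mu x y) (beta z)].

Definition ab_RotaBaxter (K : fieldType) (A : lmodType K)
  (mu : A -> A -> A) (alpha beta R : A -> A) : Prop :=
  [/\ is_linear R, commute_maps R alpha, commute_maps R beta &
      forall a b : A,
        mu (R (alpha (beta a))) (R (alpha (beta b)))
        = R (mu (alpha (beta a)) (R b) + mu (R a) (alpha (beta b)))].

Definition algebra_map (K : fieldType) (A : lmodType K)
  (mu : A -> A -> A) (eta : A -> A) : Prop :=
  is_linear eta /\ multiplicative_for mu eta.

Definition BiHomDendriform (K : fieldType) (A : lmodType K)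
  (prec succ : A -> A -> A) (alpha' beta' : A -> A) : Prop :=
  [/\ is_bilinear prec /\ is_bilinear succ,
      is_linear alpha' /\ is_linear beta',
      commute_maps alpha' beta',
      [/\ multiplicative_for prec alpha', multiplicative_for succ alpha',
          multiplicative_for prec beta' & multiplicative_for succ beta'] &
      [/\ forall x y z : A,
            prec (prec x y) (beta' z) = prec (alpha' x) (prec y z + succ y z),
          forall x y z : A,
            prec (succ x y) (beta' z) = succ (alpha' x) (prec y z) &
          forall x y z : A,
            succ (alpha' x) (succ y z) = succ (prec x y + succ x y) (beta' z)]].

(* With a := alpha beta, the Rota-Baxter identity R(a u) R(a v) = R(a u R v + R u a v)
   turns every dendriform axiom into a single instance of BiHom-associativity:
   the first and third axioms use it to merge the two operations appearing on one side,
   the second is BiHom-associativity on the nose.  The twisting maps alpha^2 beta and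
   alpha beta^2 eta are chosen so that, after pushing alpha, beta, eta and R through
   products and past each other, both sides of each axiom carry the same twists. *)
From mathcomp Require Import all_boot all_order all_algebra.
Import GRing.Theory.
Local Open Scope ring_scope.

Lemma linearD {K : fieldType} {A : lmodType K} {f : A -> A} :
  is_linear f -> forall x y, f (x + y) = f x + f y.
Proof. by move=> f_lin x y; have := f_lin 1 x y; rewrite !scale1r. Qed.

Lemma is_linear_comp {K : fieldType} {A : lmodType K} {f g : A -> A} :
  is_linear f -> is_linear g -> is_linear (fun x => f (g x)).
Proof. by move=> f_lin g_lin a x y; rewrite g_lin f_lin. Qed.

Section RotaBaxterDendriform.

Variables (K : fieldType) (A : lmodType K).
Variables (mu : A -> A -> A) (alpha beta R eta : A -> A).

Hypothesis mu_bilinear : is_bilinear mu.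
Hypotheses (alpha_linear : is_linear alpha) (beta_linear : is_linear beta).
Hypothesis alpha_beta_comm : commute_maps alpha beta.
Hypotheses (alpha_mul : multiplicative_for mu alpha) (beta_mul : multiplicative_for mu beta).
Hypothesis mu_biHomA : forall x y z, mu (alpha x) (mu y z) = mu (mu x y) (beta z).

Hypothesis R_linear : is_linear R.
Hypotheses (R_alpha : commute_maps R alpha) (R_beta : commute_maps R beta).
Hypothesis R_RotaBaxter : forall u v,
  mu (R (alpha (beta u))) (R (alpha (beta v)))
  = R (mu (alpha (beta u)) (R v) + mu (R u) (alpha (beta v))).

Hypotheses (eta_linear : is_linear eta) (eta_mul : multiplicative_for mu eta).
Hypotheses (eta_alpha : commute_maps eta alpha) (eta_beta : commute_maps eta beta).
Hypothesis eta_R : commute_maps eta R.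

Definition rb_prec x y := mu (alpha (beta x)) (R (eta y)).
Definition rb_succ x y := mu (R x) (alpha (beta (eta y))).
Definition rb_alpha x := alpha (alpha (beta x)).
Definition rb_beta x := alpha (beta (beta (eta x))).

(* Normal form alpha^i (beta^j (R^k (eta^l x))) inside products of mu. *)
Local Ltac twist_normalize :=
  repeat progress rewrite ?eta_mul ?alpha_mul ?beta_mul ?eta_alpha ?eta_beta ?eta_R
                          ?R_alpha ?R_beta -?alpha_beta_comm.

Lemma rb_prec_bilinear : is_bilinear rb_prec.
Proof.
have [mu_linr mu_linl] := mu_bilinear.
split=> u a x y; rewrite /rb_prec.
- by rewrite eta_linear R_linear mu_linr.
- by rewrite beta_linear alpha_linear mu_linl.
Qed.

Lemma rb_succ_bilinear : is_bilinear rb_succ.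
Proof.
have [mu_linr mu_linl] := mu_bilinear.
split=> u a x y; rewrite /rb_succ.
- by rewrite eta_linear beta_linear alpha_linear mu_linr.
- by rewrite R_linear mu_linl.
Qed.

Lemma rb_twists_linear : is_linear rb_alpha /\ is_linear rb_beta.
Proof. by split; do 3?[apply: is_linear_comp => //]. Qed.

Lemma rb_twists_comm : commute_maps rb_alpha rb_beta.
Proof. by move=> x; rewrite /rb_alpha /rb_beta; twist_normalize. Qed.

Lemma rb_twists_multiplicative :
  [/\ multiplicative_for rb_prec rb_alpha, multiplicative_for rb_succ rb_alpha,
      multiplicative_for rb_prec rb_beta & multiplicative_for rb_succ rb_beta].
Proof.
by split=> x y; rewrite /rb_prec /rb_succ /rb_alpha /rb_beta; twist_normalize.
Qed.

Lemma RotaBaxter_twisted u v :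
  mu (alpha (beta (R u))) (alpha (beta (R v)))
  = R (mu (alpha (beta u)) (R v) + mu (R u) (alpha (beta v))).
Proof. by rewrite -R_RotaBaxter !R_alpha !R_beta. Qed.

Lemma rb_prec_prec x y z :
  rb_prec (rb_prec x y) (rb_beta z)
  = rb_prec (rb_alpha x) (rb_prec y z + rb_succ y z).
Proof.
rewrite /rb_prec /rb_succ /rb_alpha /rb_beta !(linearD eta_linear); twist_normalize.
by rewrite -RotaBaxter_twisted mu_biHomA; twist_normalize.
Qed.

Lemma rb_succ_prec x y z :
  rb_prec (rb_succ x y) (rb_beta z) = rb_succ (rb_alpha x) (rb_prec y z).
Proof.
rewrite /rb_prec /rb_succ /rb_alpha /rb_beta; twist_normalize.
by rewrite mu_biHomA; twist_normalize.
Qed.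

Lemma rb_succ_succ x y z :
  rb_succ (rb_alpha x) (rb_succ y z)
  = rb_succ (rb_prec x y + rb_succ x y) (rb_beta z).
Proof.
rewrite /rb_prec /rb_succ /rb_alpha /rb_beta; twist_normalize.
by rewrite mu_biHomA RotaBaxter_twisted; twist_normalize.
Qed.

Lemma rb_BiHomDendriform : BiHomDendriform rb_prec rb_succ rb_alpha rb_beta.
Proof.
split.
- by split; [exact: rb_prec_bilinear | exact: rb_succ_bilinear].
- exact: rb_twists_linear.
- exact: rb_twists_comm.
- exact: rb_twists_multiplicative.
- by split; [exact: rb_prec_prec | exact: rb_succ_prec | exact: rb_succ_succ].
Qed.

End RotaBaxterDendriform.

Theorem mainTheorem7 (K : fieldType) (A : lmodType K)
  (mu : A -> A -> A) (alpha beta R eta : A -> A) :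
  BiHomAssociative mu alpha beta ->
  ab_RotaBaxter mu alpha beta R ->
  algebra_map mu eta ->
  commute_maps eta alpha -> commute_maps eta beta -> commute_maps eta R ->
  BiHomDendriform
    (fun x y => mu (alpha (beta x)) (R (eta y)))
    (fun x y => mu (R x) (alpha (beta (eta y))))
    (fun x => alpha (alpha (beta x)))
    (fun x => alpha (beta (beta (eta x)))).
Proof.
move=> [mu_bilin [alpha_lin beta_lin] ab_comm [alpha_mul beta_mul] mu_biHomA].
move=> [R_lin R_alpha R_beta R_RB] [eta_lin eta_mul] eta_alpha eta_beta eta_R.
by apply: rb_BiHomDendriform.
Qed.
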